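(* Let $\beta\in(0,1)$ and run the general conversion scheme below. For $t\in[T]$ let $\mathbf{Y}_t$ be the random point equal to $\mathbf{y}_s$ with probability $q_{t,s}:=\beta^{t-s}\frac{1-\beta}{1-\beta^t}$ ($s=1,\dots,t$), and $\overline{\mathbf{y}}_t:=\mathbb{E}_{\mathbf{Y}_t}[\mathbf{Y}_t]=\frac{1-\beta}{1-\beta^t}\sum_{s=1}^t\beta^{t-s}\mathbf{y}_s$. Then $$\mathbb{E}_\tau\mathbb{E}_{\mathbf{Y}_\tau}\|\mathbf{Y}_\tau-\overline{\mathbf{y}}_\tau\|^2\le\frac2T\,\mathbb{E}\sum_{t=1}^T\|\Delta_t\|^2+\frac{4\beta}{(1-\beta)^2T}\,\mathbb{E}\sum_{t=1}^T\|\mathbf{x}_t-\mathbf{x}_{t-1}\|^2.$$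
   Context: Norms are Euclidean. General conversion scheme: input $\mathbf{x}_0=\mathbf{w}_0\in\mathbb{R}^d$, $T$, $\mu\ge0$, online learner $\mathcal{A}$. For $t=1,\dots,T$: receive $\Delta_t$ from $\mathcal{A}$; choose $\mathbf{x}_t$ arbitrarily; $\mathbf{w}_t=\mathbf{x}_t+\Delta_t$; $\mathbf{y}_t=\mathbf{x}_t+s_t\Delta_t$ with $s_t\sim\mathrm{Unif}[0,1]$ i.i.d.; $\mathbf{g}_t$ is a stochastic gradient at $\mathbf{y}_t$; send $\ell_t(\mathbf{v})=\langle\mathbf{g}_t,\mathbf{v}\rangle+\frac\mu2\|\mathbf{v}\|^2$ to $\mathcal{A}$. The random index $\tau\in[T]$ is independent of the algorithm with $\Pr(\tau=t)=\frac{1-\beta^t}{T}$ ($t\le T-1$), $\Pr(\tau=T)=\frac{1-\beta^T}{(1-\beta)T}$; $\mathbb{E}_\tau$ is expectation over $\tau$ and all algorithmic randomness. *)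

From HB Require Import structures.
From mathcomp Require Import all_boot all_order all_algebra.
From mathcomp Require Import all_classical all_reals all_analysis.
Set Implicit Arguments. Unset Strict Implicit. Unset Printing Implicit Defensive.
Import Order.TTheory GRing.Theory Num.Theory.
Local Open Scope ring_scope.

Definition sqnorm (R : realType) (n : nat) (v : 'rV[R]_n) : R :=
  \sum_(i < n) (v ord0 i) ^+ 2.

Definition qw (R : realType) (beta : R) (t s : nat) : R :=
  beta ^+ (t - s) * (1 - beta) / (1 - beta ^+ t).

(* Pr(tau = t) *)
Definition ptau (R : realType) (beta : R) (T t : nat) : R :=
  if (t < T)%N then (1 - beta ^+ t) / T%:R
  else (1 - beta ^+ T) / ((1 - beta) * T%:R).

Definition ybar (R : realType) (n : nat) (beta : R) (y : nat -> 'rV[R]_n) (t : nat)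
  : 'rV[R]_n :=
  \sum_(1 <= s < t.+1) qw beta t s *: y s.

(* E_tau E_{Y_tau} ||Y_tau - ybar_tau||^2 for one realization of the algorithm *)
Definition var_tau (R : realType) (n : nat) (beta : R) (T : nat)
  (y : nat -> 'rV[R]_n) : R :=
  \sum_(1 <= t < T.+1) ptau beta T t *
     \sum_(1 <= s < t.+1) qw beta t s * sqnorm (y s - ybar beta y t).

From HB Require Import structures.
From mathcomp Require Import all_boot all_order all_algebra.
From mathcomp Require Import all_classical all_reals all_analysis.
From mathcomp Require Import measurable_realfun ring lra.
Set Implicit Arguments. Unset Strict Implicit. Unset Printing Implicit Defensive.
Import Order.TTheory GRing.Theory Num.Theory.
Local Open Scope ring_scope.

(* For each sample, the weighted mean [ybar t] minimises the [qw b t]-weighted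
   squared deviation, so it may be replaced by [x t]; then
   ||y_s - x_t||^2 <= 2 ||Delta_s||^2 + 2 ||x_s - x_t||^2, and by Cauchy-Schwarz
   ||x_s - x_t||^2 <= (t - s) sum_{s<k<=t} ||x_k - x_{k-1}||^2.  Under the joint
   law of tau and Y_tau every index s has weight exactly 1/T, which gives the
   [Delta] term, while each increment ||x_k - x_{k-1}||^2 gets total weight at
   most b(1+b)/((1-b)^2 T) <= 2b/((1-b)^2 T); the latter follows from a potential
   argument on the discounted sums sum_s b^(t-s) F_s.  The bound thus holds
   pointwise, and integrating it needs only the linearity of the integral. *)

Section SquaredNorm.
Variables (R : realType) (n : nat).
Implicit Types (u v z : 'rV[R]_n) (c : R).

Lemma sqnorm_ge0 v : 0 <= sqnorm v.
Proof. by apply: sumr_ge0 => i _; exact: sqr_ge0. Qed.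

Lemma sqnormZ c v : sqnorm (c *: v) = c ^+ 2 * sqnorm v.
Proof. by rewrite /sqnorm mulr_sumr; apply: eq_bigr => i _; rewrite mxE exprMn. Qed.

Lemma sqnormN v : sqnorm (- v) = sqnorm v.
Proof. by rewrite -scaleN1r sqnormZ sqrrN expr1n mul1r. Qed.

Lemma sqnormD_le u v : sqnorm (u + v) <= 2 * sqnorm u + 2 * sqnorm v.
Proof.
rewrite /sqnorm !mulr_sumr -big_split /=; apply: ler_sum => i _; rewrite mxE.
by have := sqr_ge0 (u ord0 i - v ord0 i); lra.
Qed.

Lemma sum_sqr_dev (I : Type) (r : seq I) (q a : I -> R) (z : R) :
  \sum_(i <- r) q i = 1 ->
  \sum_(i <- r) q i * (a i - z) ^+ 2 =
  \sum_(i <- r) q i * (a i - \sum_(j <- r) q j * a j) ^+ 2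
   + (\sum_(j <- r) q j * a j - z) ^+ 2.
Proof.
move=> q1; set m := \sum_(j <- r) q j * a j.
have centered : \sum_(i <- r) q i * (a i - m) = 0.
  under eq_bigr do rewrite mulrBr.
  by rewrite sumrB -mulr_suml q1 mul1r subrr.
have expand i : q i * (a i - z) ^+ 2 = q i * (a i - m) ^+ 2
    + 2 * (m - z) * (q i * (a i - m)) + (m - z) ^+ 2 * q i by ring.
under eq_bigr do rewrite expand.
by rewrite !big_split /= -!mulr_sumr centered q1; ring.
Qed.

Lemma sum_sqnorm_dev (I : Type) (r : seq I) (q : I -> R) (a : I -> 'rV[R]_n) z :
  \sum_(i <- r) q i = 1 ->
  \sum_(i <- r) q i * sqnorm (a i - z) =
  \sum_(i <- r) q i * sqnorm (a i - \sum_(j <- r) q j *: a j)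
   + sqnorm (\sum_(j <- r) q j *: a j - z).
Proof.
move=> q1; rewrite /sqnorm; under eq_bigr do rewrite mulr_sumr.
under [in RHS]eq_bigr do rewrite mulr_sumr.
rewrite exchange_big [X in X + _]exchange_big /= -big_split /=.
apply: eq_bigr => k _.
have mean_k : (\sum_(j <- r) q j *: a j) ord0 k = \sum_(j <- r) q j * a j ord0 k.
  by rewrite summxE; apply: eq_bigr => j _; rewrite mxE.
under eq_bigr do rewrite !mxE.
under [X in X + _]eq_bigr do rewrite !mxE mean_k.
by rewrite !mxE mean_k; exact: sum_sqr_dev.
Qed.

Lemma sum_sqnorm_dev_mean_le (I : Type) (r : seq I) (q : I -> R) (a : I -> 'rV[R]_n) z :
  \sum_(i <- r) q i = 1 ->
  \sum_(i <- r) q i * sqnorm (a i - \sum_(j <- r) q j *: a j)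
  <= \sum_(i <- r) q i * sqnorm (a i - z).
Proof. by move=> q1; rewrite (sum_sqnorm_dev _ _ q1) lerDl sqnorm_ge0. Qed.

Lemma sqnorm_mean_le (I : Type) (r : seq I) (q : I -> R) (a : I -> 'rV[R]_n) :
  (forall i, 0 <= q i) -> \sum_(i <- r) q i = 1 ->
  sqnorm (\sum_(i <- r) q i *: a i) <= \sum_(i <- r) q i * sqnorm (a i).
Proof.
move=> q_ge0 q1; have := sum_sqnorm_dev a 0 q1.
under eq_bigr do rewrite subr0.
rewrite subr0 => ->; rewrite lerDr.
by apply: sumr_ge0 => i _; rewrite mulr_ge0 ?sqnorm_ge0.
Qed.

Lemma sqnorm_sum_le (I : Type) (r : seq I) (a : I -> 'rV[R]_n) :
  sqnorm (\sum_(i <- r) a i) <= (size r)%:R * \sum_(i <- r) sqnorm (a i).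
Proof.
case: r => [|i0 r].
  by rewrite !big_nil mul0r /sqnorm big1 // => k _; rewrite mxE expr0n.
set s := i0 :: r; set N : R := (size s)%:R.
have N_gt0 : 0 < N by rewrite ltr0n.
have q1 : \sum_(i <- s) N^-1 = 1.
  by rewrite big_const_seq count_predT iter_addr_0 -mulr_natr mulVf ?gt_eqF.
have N_inv_ge0 : 0 <= N^-1 by rewrite invr_ge0 ltW.
have := sqnorm_mean_le a (fun _ => N_inv_ge0) q1.
rewrite -scaler_sumr -mulr_sumr sqnormZ.
set X := sqnorm _; set Y := \sum_(i <- s) _ => le_XY.
have -> : X = N ^+ 2 * (N^-1 ^+ 2 * X) by rewrite mulrA -exprMn divff ?gt_eqF // expr1n mul1r.
have -> : N * Y = N ^+ 2 * (N^-1 * Y) by rewrite expr2 -mulrA mulVKf ?gt_eqF.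
by rewrite ler_pM2l ?exprn_gt0.
Qed.

Lemma sqnorm_telescope_le (x : nat -> 'rV[R]_n) (s t : nat) : (s <= t)%N ->
  sqnorm (x t - x s) <= (t - s)%:R * \sum_(s.+1 <= k < t.+1) sqnorm (x k - x k.-1).
Proof.
move=> le_st; have -> : x t - x s = \sum_(s.+1 <= k < t.+1) (x k - x k.-1).
  by rewrite big_add1 /= telescope_sumr.
by have := sqnorm_sum_le (index_iota s.+1 t.+1) (fun k => x k - x k.-1); rewrite size_iota subSS.
Qed.

End SquaredNorm.

Section DiscountedSum.
Variables (R : realFieldType) (b : R).
Implicit Types (F G : nat -> R).

Definition discsum n F := \sum_(1 <= s < n.+1) b ^+ (n - s) * F s.

Lemma discsum0 F : discsum 0 F = 0.
Proof. by rewrite /discsum big_geq. Qed.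

Lemma discsumS n F : discsum n.+1 F = b * discsum n F + F n.+1.
Proof.
rewrite /discsum big_nat_recr //= subnn mul1r mulr_sumr; congr (_ + _).
by apply: eq_big_nat => s /andP[_ le_sn]; rewrite mulrA -exprS subSn.
Qed.

Lemma eq_discsum n F G : (forall s, (0 < s <= n)%N -> F s = G s) ->
  discsum n F = discsum n G.
Proof. by move=> FG; apply: eq_big_nat => s /FG ->. Qed.

Lemma discsumD n F G : discsum n (fun s => F s + G s) = discsum n F + discsum n G.
Proof. by rewrite /discsum -big_split; apply: eq_bigr => s _; rewrite mulrDr. Qed.

Lemma discsumZ n c F : discsum n (fun s => c * F s) = c * discsum n F.
Proof. by rewrite /discsum mulr_sumr; apply: eq_bigr => s _; rewrite mulrCA. Qed.

Lemma sum_discsum n F :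
  (1 - b) * \sum_(1 <= t < n.+1) discsum t F + b * discsum n F = \sum_(1 <= t < n.+1) F t.
Proof.
elim: n => [|n IH]; first by rewrite !big_geq // discsum0 !mulr0 addr0.
by rewrite !(big_nat_recr n.+1) //= discsumS -IH; ring.
Qed.

Lemma discsum1 n : (1 - b) * discsum n (fun=> 1) = 1 - b ^+ n.
Proof.
elim: n => [|n IH]; first by rewrite discsum0 mulr0 subrr.
by rewrite discsumS mulrDr mulrCA IH exprS; ring.
Qed.

Hypotheses (b_ge0 : 0 <= b) (b_lt1 : b < 1).

Let b'_gt0 : 0 < 1 - b. Proof. by rewrite subr_gt0. Qed.
Let b'_neq0 : 1 - b != 0. Proof. by rewrite gt_eqF. Qed.

Lemma discsum_ge0 n F : (forall s, 0 <= F s) -> 0 <= discsum n F.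
Proof. by move=> F_ge0; apply: sumr_ge0 => s _; rewrite mulr_ge0 ?exprn_ge0. Qed.

Lemma discsum1_le n : discsum n (fun=> 1) <= (1 - b)^-1.
Proof.
rewrite -(ler_pM2l b'_gt0) discsum1 mulfV //.
by rewrite lerBlDr lerDl exprn_ge0.
Qed.

Lemma discsum_lag_le n : discsum n (fun s => (n.+1 - s)%:R) <= (1 - b) ^- 2.
Proof.
elim: n => [|n IH]; first by rewrite discsum0 invr_ge0 exprn_ge0 ?ltW.
rewrite discsumS subSnn (@eq_discsum _ _ (fun s => (n.+1 - s)%:R + 1)); last first.
  by move=> s /andP[_ le_sn]; rewrite subSn ?leqW // -addn1 natrD.
rewrite discsumD.
have -> : (1 - b) ^- 2 = b * ((1 - b) ^- 2 + (1 - b)^-1) + 1 by field.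
by rewrite lerD2r ler_wpM2l // lerD // discsum1_le.
Qed.

Variable d : nat -> R.
Hypothesis d_ge0 : forall k, 0 <= d k.

Lemma discsum_tail_le n :
  discsum n (fun s => \sum_(s.+1 <= k < n.+1) d k) <= b / (1 - b) * discsum n d.
Proof.
elim: n => [|n IH]; first by rewrite !discsum0 mulr0.
rewrite discsumS big_geq // addr0.
rewrite (@eq_discsum _ _ (fun s => \sum_(s.+1 <= k < n.+1) d k + d n.+1 * 1)); last first.
  by move=> s /andP[_ le_sn]; rewrite big_nat_recr //= mulr1.
rewrite discsumD discsumZ discsumS.
have -> : b / (1 - b) * (b * discsum n d + d n.+1) =
    b * (b / (1 - b) * discsum n d + d n.+1 * (1 - b)^-1) by field.
by rewrite ler_wpM2l // lerD // ler_wpM2l // discsum1_le.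
Qed.

(* Discounted form of the Cauchy-Schwarz bound (t - s) sum_{s<k<=t} d k on the
   squared distance between the iterates s and t. *)
Definition drift n := discsum n (fun s => (n - s)%:R * \sum_(s.+1 <= k < n.+1) d k).

Lemma driftS n : drift n.+1 = b * (drift n
  + discsum n (fun s => \sum_(s.+1 <= k < n.+1) d k)
  + d n.+1 * discsum n (fun s => (n.+1 - s)%:R)).
Proof.
rewrite /drift discsumS subnn mul0r addr0.
rewrite (@eq_discsum _ _ (fun s => (n - s)%:R * \sum_(s.+1 <= k < n.+1) d k
    + \sum_(s.+1 <= k < n.+1) d k + d n.+1 * (n.+1 - s)%:R)); last first.
  by move=> s /andP[_ le_sn]; rewrite big_nat_recr //= subSn // -addn1 natrD; ring.
by rewrite !discsumD discsumZ.
Qed.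

(* The [discsum n d] term is a potential absorbing the tail sums of [driftS]. *)
Lemma drift_potential_le n :
  (1 - b) * \sum_(1 <= t < n.+1) drift t + b * drift n + (b / (1 - b)) ^+ 2 * discsum n d
  <= b * (1 + b) / (1 - b) ^+ 2 * \sum_(1 <= k < n.+1) d k.
Proof.
elim: n => [|n IH]; first by rewrite !big_geq // /drift !discsum0 !mulr0 !addr0.
have tail := ler_wpM2l b_ge0 (discsum_tail_le n).
have lag := ler_wpM2l b_ge0 (ler_wpM2l (d_ge0 n.+1) (discsum_lag_le n)).
rewrite -subr_ge0 in IH; rewrite -subr_ge0 in tail; rewrite -subr_ge0 in lag.
rewrite -subr_ge0.
apply: (le_trans (addr_ge0 (addr_ge0 IH tail) lag)).
rewrite !(big_nat_recr n.+1) //= driftS discsumS le_eqVlt; apply/orP; left.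
by apply/eqP; field.
Qed.

Lemma drift_sum_le n :
  (1 - b) * \sum_(1 <= t < n.+1) drift t + b * drift n
  <= 2 * b / (1 - b) ^+ 2 * \sum_(1 <= k < n.+1) d k.
Proof.
apply: le_trans (le_trans _ (drift_potential_le n)) _.
  by rewrite lerDl mulr_ge0 ?sqr_ge0 ?discsum_ge0.
apply: ler_wpM2r; first by apply: sumr_ge0 => k _.
apply: ler_wpM2r; first by rewrite invr_ge0 exprn_ge0 // ltW.
by rewrite [2 * b]mulrC ler_wpM2l //; move: b_lt1; lra.
Qed.

End DiscountedSum.

Section ConversionWeights.
Variables (R : realType) (b : R).
Hypotheses (b_ge0 : 0 <= b) (b_lt1 : b < 1).

Let one_sub_powb_neq0 t : (0 < t)%N -> 1 - b ^+ t != 0.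
Proof. by move=> t_gt0; rewrite subr_eq0 eq_sym lt_eqF // expr_lt1. Qed.

Lemma qw_ge0 t s : 0 <= qw b t s.
Proof.
by rewrite /qw !mulr_ge0 ?exprn_ge0 ?invr_ge0 ?subr_ge0 ?exprn_ile1 // ltW.
Qed.

Lemma ptau_ge0 T t : 0 <= ptau b T t.
Proof.
by rewrite /ptau; case: ifP => _; rewrite !mulr_ge0 ?invr_ge0 ?mulr_ge0 ?subr_ge0 ?exprn_ile1 // ltW.
Qed.

Lemma sum_qw_discsum t (G : nat -> R) :
  \sum_(1 <= s < t.+1) qw b t s * G s = (1 - b) / (1 - b ^+ t) * discsum b t G.
Proof. by rewrite /discsum mulr_sumr; apply: eq_bigr => s _; rewrite /qw; ring. Qed.

Lemma sum_qw t : (0 < t)%N -> \sum_(1 <= s < t.+1) qw b t s = 1.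
Proof.
move=> t_gt0; under eq_bigr do rewrite -[qw _ _ _]mulr1.
by rewrite sum_qw_discsum mulrAC discsum1 divff // one_sub_powb_neq0.
Qed.

Lemma sum_ptau_qw T (G : nat -> nat -> R) : (0 < T)%N ->
  \sum_(1 <= t < T.+1) ptau b T t * \sum_(1 <= s < t.+1) qw b t s * G t s
  = T%:R^-1 * ((1 - b) * \sum_(1 <= t < T.+1) discsum b t (G t) + b * discsum b T (G T)).
Proof.
move=> T_gt0; have T_neq0 : T%:R != 0 :> R by rewrite pnatr_eq0 -lt0n.
have b'_neq0 : 1 - b != 0 by rewrite subr_eq0 gt_eqF.
rewrite big_nat_recr //= [in RHS]big_nat_recr //= sum_qw_discsum /ptau ltnn.
rewrite (@eq_big_nat _ _ _ 1 T _ (fun t => T%:R^-1 * ((1 - b) * discsum b t (G t)))).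
  by rewrite -!mulr_sumr; field; rewrite T_neq0 b'_neq0 one_sub_powb_neq0.
by move=> t /andP[t_gt0 ltT]; rewrite sum_qw_discsum /ptau ltT; field; rewrite T_neq0 one_sub_powb_neq0.
Qed.

Lemma sum_ptau_qw_le T (D d : nat -> R) : (0 < T)%N -> (forall k, 0 <= d k) ->
  \sum_(1 <= t < T.+1) ptau b T t * \sum_(1 <= s < t.+1) qw b t s *
      (2 * D s + 2 * ((t - s)%:R * \sum_(s.+1 <= k < t.+1) d k))
  <= 2 / T%:R * \sum_(1 <= t < T.+1) D t
     + 4 * b / ((1 - b) ^+ 2 * T%:R) * \sum_(1 <= t < T.+1) d t.
Proof.
move=> T_gt0 d_ge0; have T_gt0' : 0 < T%:R :> R by rewrite ltr0n.
rewrite sum_ptau_qw //; under eq_bigr do rewrite discsumD !discsumZ.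
rewrite discsumD !discsumZ big_split /= -!mulr_sumr.
have drift_le := drift_sum_le b_ge0 b_lt1 d_ge0 T.
rewrite -subr_ge0 in drift_le; rewrite -subr_ge0 -(sum_discsum b T D).
apply: le_trans (mulr_ge0 (_ : 0 <= 2 / T%:R) drift_le) _; first by rewrite divr_ge0.
rewrite /drift le_eqVlt; apply/orP; left; apply/eqP; field.
by rewrite !gt_eqF // subr_gt0.
Qed.

Lemma var_tau_ge0 n T (y : nat -> 'rV[R]_n) : 0 <= var_tau b T y.
Proof.
apply: sumr_ge0 => t _; rewrite mulr_ge0 ?ptau_ge0 //.
by apply: sumr_ge0 => s _; rewrite mulr_ge0 ?qw_ge0 ?sqnorm_ge0.
Qed.

Lemma var_tau_le n T (x Delta : nat -> 'rV[R]_n) (c : nat -> R) :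
  (0 < T)%N -> (forall t, 0 <= c t <= 1) ->
  var_tau b T (fun t => x t + c t *: Delta t)
  <= 2 / T%:R * \sum_(1 <= t < T.+1) sqnorm (Delta t)
     + 4 * b / ((1 - b) ^+ 2 * T%:R) * \sum_(1 <= t < T.+1) sqnorm (x t - x t.-1).
Proof.
move=> T_gt0 c01; apply: le_trans (sum_ptau_qw_le (fun s => sqnorm (Delta s)) T_gt0
  (fun k => sqnorm_ge0 (x k - x k.-1))).
apply: ler_sum_nat => t /andP[t_gt0 _]; rewrite ler_wpM2l ?ptau_ge0 //.
rewrite /ybar; apply: le_trans (sum_sqnorm_dev_mean_le _ (x t) (sum_qw t_gt0)) _.
apply: ler_sum_nat => s /andP[_ le_st]; rewrite ler_wpM2l ?qw_ge0 //.
rewrite addrAC; apply: le_trans (sqnormD_le _ _) _; rewrite [leRHS]addrC.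
apply: lerD; rewrite ler_wpM2l //; last first.
  have /andP[c_ge0 c_le1] := c01 s.
  by rewrite sqnormZ ler_piMl ?sqnorm_ge0 ?exprn_ile1.
by rewrite -opprB sqnormN sqnorm_telescope_le.
Qed.

End ConversionWeights.

Section Integration.
Context d (T : measurableType d) (R : realType).

(* The integral of a nonnegative function is the supremum of the integrals of the
   simple functions below it, so the smaller integrand need not be measurable. *)
Lemma ge0_le_integral_nomeas (mu : {measure set T -> \bar R}) (f g : T -> \bar R) :
  (forall w, 0 <= f w)%E -> (forall w, f w <= g w)%E ->
  (\int[mu]_(w in setT) f w <= \int[mu]_(w in setT) g w)%E.
Proof.
move=> f_ge0 fg; have g_ge0 w : (0 <= g w)%E by exact: le_trans (fg w).
rewrite !ge0_integralTE //; apply: ereal_sup_le => _ [h hf <-].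
by exists h => // w; exact: le_trans (fg w).
Qed.

Lemma measurable_sqnorm n (v : T -> 'rV[R]_n) :
  (forall i, measurable_fun setT (fun w => v w ord0 i)) ->
  measurable_fun setT (fun w => sqnorm (v w)).
Proof. by move=> mv; apply: measurable_sum => i; exact: measurable_funX. Qed.

Lemma ge0_integral_lincomb (mu : {measure set T -> \bar R}) (c1 c2 : R) (f g : T -> R) :
  0 <= c1 -> 0 <= c2 -> (forall w, 0 <= f w) -> (forall w, 0 <= g w) ->
  measurable_fun setT f -> measurable_fun setT g ->
  (\int[mu]_(w in setT) (c1 * f w + c2 * g w)%:E
   = c1%:E * \int[mu]_(w in setT) (f w)%:E + c2%:E * \int[mu]_(w in setT) (g w)%:E)%E.
Proof.
move=> c1_ge0 c2_ge0 f_ge0 g_ge0 /measurable_EFinP mf /measurable_EFinP mg.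
under eq_integral do rewrite EFinD !EFinM.
rewrite ge0_integralD ?ge0_integralZl ?lee_fin //;
  do ?[exact: measurable_funeM | by move=> w _; rewrite ?mule_ge0 ?lee_fin ?f_ge0 ?g_ge0].
Qed.

End Integration.

Theorem lemma4 (R : realType) (disp : measure_display) (Omega : measurableType disp)
  (P : probability Omega R) (dim T : nat) (beta : R)
  (x Delta : nat -> Omega -> 'rV[R]_dim) (s : nat -> Omega -> R) :
  (0 < T)%N -> 0 < beta < 1 ->
  (forall t (i : 'I_dim), measurable_fun setT (fun w => x t w ord0 i)) ->
  (forall t (i : 'I_dim), measurable_fun setT (fun w => Delta t w ord0 i)) ->
  (forall t, measurable_fun setT (s t)) ->
  (forall t w, 0 <= s t w <= 1) ->
  let y := fun w t => x t w + s t w *: Delta t w in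
  (\int[P]_(w in setT) (var_tau beta T (y w))%:E <=
     (2 / T%:R)%:E *
       \int[P]_(w in setT) (\sum_(1 <= t < T.+1) sqnorm (Delta t w))%:E
   + (4 * beta / ((1 - beta) ^+ 2 * T%:R))%:E *
       \int[P]_(w in setT) (\sum_(1 <= t < T.+1) sqnorm (x t w - x t.-1 w))%:E)%E.
Proof.
move=> T_gt0 /andP[beta_gt0 beta_lt1] mx mDelta _ s01; cbv zeta.
have beta_ge0 := ltW beta_gt0.
have mdx t i : measurable_fun setT (fun w => (x t w - x t.-1 w) ord0 i).
  by under eq_fun do rewrite !mxE; exact: measurable_funB.
rewrite -ge0_integral_lincomb.
- apply: ge0_le_integral_nomeas => w; rewrite lee_fin; first exact: var_tau_ge0.
  exact: (var_tau_le beta_ge0 beta_lt1 (x^~ w) (Delta^~ w) T_gt0 (s01^~ w)).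
- by rewrite divr_ge0.
- by rewrite divr_ge0 ?mulr_ge0 ?exprn_ge0 // ?subr_ge0 ltW.
- by move=> w; apply: sumr_ge0 => t _; exact: sqnorm_ge0.
- by move=> w; apply: sumr_ge0 => t _; exact: sqnorm_ge0.
- by apply: measurable_sum => t; exact: measurable_sqnorm.
- by apply: measurable_sum => t; exact: measurable_sqnorm.
Qed.
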